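(* Let $\alpha\ge4$ and let $N'$, $M_l$, $C_j$ be as produced by the clustering procedure, and $Z_l=\sum_{j\in M_l}y_j$. If $i\in N'$ satisfies $Z_i<1$, then $N'\setminus\{i\}\neq\emptyset$ and there exists $l\in N'\setminus\{i\}$ with $c_{il}\le \frac{2C_i}{1-Z_i}$.
   Context: Setting: finite set $N$ of locations, capacity $M>0$, demands $d_j\ge0$, integer $k\ge1$, metric costs $c_{ij}$ on $N$ (nonnegative, $c_{ii}=0$, symmetric, triangle inequality). $(x,y)$ is an optimal solution of the LP-relaxation: minimize $\sum_{i,j}d_jc_{ij}x_{ij}$ s.t. $\sum_{i}x_{ij}=1$ ($j\in N$), $\sum_j d_jx_{ij}\le My_i$ ($i\in N$), $\sum_i y_i\le k$, $0\le x_{ij}\le y_i$, $0\le y_i\le1$. For $j\in N$ let $C_j=\sum_{i\in N}c_{ij}x_{ij}$. Clustering procedure: order the locations as $1,\dots,n$ so that $C_1\le\dots\le C_n$ (ties arbitrary); start with $N'=\emptyset$; for $j=1,\dots,n$ in turn, if there is no $l\in N'$ with $c_{lj}\le 2\alpha C_j$, add $j$ to $N'$. Then for each $j\in N$ let $N'(j)$ be a closest element of $N'$ to $j$ (ties arbitrary), and set $M_l=\{j\in N: N'(j)=l\}$ for $l\in N'$. *)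

From HB Require Import structures.
From mathcomp Require Import all_boot all_order all_algebra.
Set Implicit Arguments. Unset Strict Implicit. Unset Printing Implicit Defensive.
Import Order.TTheory GRing.Theory Num.Theory.
Local Open Scope ring_scope.

Section Defs.
Variables (R : realFieldType) (T : finType).

Definition metric (c : T -> T -> R) : Prop :=
  [/\ forall i j, 0 <= c i j,
      forall i, c i i = 0,
      forall i j, c i j = c j i &
      forall i j l, c i l <= c i j + c j l].

Definition lp_feasible (M : R) (d : T -> R) (k : nat)
    (x : T -> T -> R) (y : T -> R) : Prop :=
  [/\ forall j, \sum_(i : T) x i j = 1,
      forall i, \sum_(j : T) d j * x i j <= M * y i,
      \sum_(i : T) y i <= k%:R,
      forall i j, 0 <= x i j /\ x i j <= y i &
      forall i, 0 <= y i /\ y i <= 1].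

Definition lp_cost (d : T -> R) (c : T -> T -> R) (x : T -> T -> R) : R :=
  \sum_(i : T) \sum_(j : T) d j * c i j * x i j.

Definition lp_optimal M d k c x y : Prop :=
  lp_feasible M d k x y /\
  forall x' y', lp_feasible M d k x' y' -> lp_cost d c x <= lp_cost d c x'.

Definition Cval (c : T -> T -> R) (x : T -> T -> R) (j : T) : R :=
  \sum_(i : T) c i j * x i j.

Definition cluster_centers (alpha : R) (c : T -> T -> R) (C : T -> R)
    (s : seq T) : seq T :=
  foldl (fun acc j => if has (fun l => c l j <= 2 * alpha * C j) acc
                      then acc else rcons acc j) [::] s.

(* Z_l = sum_{j in M_l} y_j with M_l = {j | f j = l} *)
Definition Zval (f : T -> T) (y : T -> R) (l : T) : R :=
  \sum_(j : T | f j == l) y j.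

End Defs.

From HB Require Import structures.
From mathcomp Require Import all_boot all_order all_algebra.
Import Order.TTheory GRing.Theory Num.Theory.
Local Open Scope ring_scope.

(* Only the metric, the feasibility of x and the choice of closest centers
   matter.  Since Z_i < 1, the fraction 1 - Z_i of the demand of i is served by
   facilities j with N'(j) <> i; for each of them c(i, N'(j)) <= 2 c_ji because
   N'(j) is at least as close to j as the center i.  Averaging with the weights
   x_ji, the nearest such center l = N'(j) satisfies (1 - Z_i) c_il <= 2 C_i. *)

Lemma sumr_pred_le {R : numDomainType} {I : finType} (P : pred I) (F : I -> R) :
  (forall j, 0 <= F j) -> \sum_(j | P j) F j <= \sum_j F j.
Proof.
move=> F_ge0; rewrite [leRHS](bigID P) /= lerDl.
by apply: sumr_ge0 => j _; exact: F_ge0.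
Qed.

Lemma ler_min_mul_sum {R : numDomainType} {I : finType} {P : pred I}
    {g w : I -> R} {j0 : I} :
  (forall j, P j -> g j0 <= g j) -> (forall j, P j -> 0 <= w j) ->
  g j0 * \sum_(j | P j) w j <= \sum_(j | P j) g j * w j.
Proof.
move=> g_min w_ge0; rewrite mulr_sumr; apply: ler_sum => j Pj.
by apply: ler_wpM2r; [exact: w_ge0 | exact: g_min].
Qed.

Lemma dist_closest_le {R : realFieldType} {T : finType} {c : T -> T -> R}
    {N : seq T} {f : T -> T} {i j : T} :
  metric c -> i \in N -> (forall l, l \in N -> c (f j) j <= c l j) ->
  c i (f j) <= 2 * c j i.
Proof.
move=> [_ _ c_sym c_tri] iN f_closest.
apply: (le_trans (c_tri i j (f j))).
by rewrite (c_sym j (f j)) (c_sym j i) mulrDl mul1r lerD2l f_closest.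
Qed.

Lemma lp_mass_outside_cluster {R : realFieldType} {T : finType}
    {x : T -> T -> R} {y : T -> R} (f : T -> T) (i : T) :
  (forall j, \sum_l x l j = 1) -> (forall l j, 0 <= x l j /\ x l j <= y l) ->
  1 - Zval f y i <= \sum_(j | f j != i) x j i.
Proof.
move=> x_col x_le_y.
have in_cluster : \sum_(j | f j == i) x j i <= Zval f y i.
  by apply: ler_sum => j _; case: (x_le_y j i).
by rewrite -(x_col i) (bigID (fun j => f j == i)) /= lerBlDr addrC lerD2l.
Qed.

Theorem mainTheorem5 (R : realFieldType) (T : finType)
    (M : R) (d : T -> R) (k : nat) (c : T -> T -> R)
    (x : T -> T -> R) (y : T -> R) (alpha : R)
    (s : seq T) (f : T -> T) (i : T) :
  0 < M -> (forall j, 0 <= d j) -> (1 <= k)%N -> metric c ->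
  lp_optimal M d k c x y ->
  4 <= alpha ->
  (* s orders all locations by nondecreasing C_j (ties arbitrary) *)
  perm_eq s (enum T) ->
  sorted (fun a b => Cval c x a <= Cval c x b) s ->
  (* f j = N'(j) is a closest element of N' to j (ties arbitrary) *)
  (forall j, f j \in cluster_centers alpha c (Cval c x) s) ->
  (forall j l, l \in cluster_centers alpha c (Cval c x) s -> c (f j) j <= c l j) ->
  i \in cluster_centers alpha c (Cval c x) s ->
  Zval f y i < 1 ->
  (exists l, (l \in cluster_centers alpha c (Cval c x) s) && (l != i)) /\
  (exists l, [/\ l \in cluster_centers alpha c (Cval c x) s, l != i &
                 c i l <= 2 * Cval c x i / (1 - Zval f y i)]).
Proof.
move=> _ _ _ c_metric [[x_col _ _ x_le_y _] _] _ _ _ f_center f_closest iN Z_lt1.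
have x_ge0 j : 0 <= x j i by case: (x_le_y j i).
have mass := lp_mass_outside_cluster f i x_col x_le_y.
have Z_gap : 0 < 1 - Zval f y i by rewrite subr_gt0.
have [j0 /andP [fj0 _]] : exists j0, (f j0 != i) && (0 < x j0 i).
  apply: psumr_neq0P => [j _ //|]; apply/eqP; rewrite gt_eqF //.
  exact: lt_le_trans mass.
split; first by exists (f j0); rewrite f_center.
have [j1 fj1 j1_min] := @arg_minP _ _ _ j0 (fun j => f j != i) (fun j => c i (f j)) fj0.
exists (f j1); split => //.
have [c_ge0 _ _ _] := c_metric.
have via_closest : \sum_(j | f j != i) c i (f j) * x j i
                   <= \sum_(j | f j != i) 2 * (c j i * x j i).
  apply: ler_sum => j _; rewrite mulrA; apply: ler_wpM2r => //.
  exact: dist_closest_le c_metric iN (f_closest j).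
have outside_le_C : \sum_(j | f j != i) 2 * (c j i * x j i) <= 2 * Cval c x i.
  by rewrite /Cval mulr_sumr; apply: sumr_pred_le => j; rewrite !mulr_ge0 ?c_ge0.
rewrite ler_pdivlMr //.
apply: le_trans (ler_wpM2l (c_ge0 _ _) mass) _.
apply: le_trans (ler_min_mul_sum j1_min (fun j _ => x_ge0 j)) _.
exact: le_trans via_closest outside_le_C.
Qed.
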